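(* Let $f\in\mathbb{Q}[x]$ be such that $f=f_1\cdots f_u$ for distinct irreducible $f_1,\dots,f_u\in\mathbb{Q}[x]$. For each $i$, let $m_i\in\mathbb{N}$ be minimal such that $f_i\mid(x^{m_i}-r_i)$ for some $r_i\in\mathbb{Q}$, and suppose $f\mid(x^m-r)$ for some positive integer $m$ and $r\in\mathbb{Q}$. Then $\operatorname{lcm}(m_1,\dots,m_u)\mid m$. *)

From mathcomp Require Import all_boot all_order all_algebra.
Set Implicit Arguments. Unset Strict Implicit. Unset Printing Implicit Defensive.
Import GRing.Theory.
Local Open Scope ring_scope.

Definition divides_binomial (g : {poly rat}) (k : nat) : Prop :=
  exists r : rat, g %| 'X^k - r%:P.

Definition minimal_binomial_exponent (g : {poly rat}) (k : nat) : Prop :=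
  (0 < k)%N /\ divides_binomial g k /\
  forall k' : nat, (0 < k')%N -> divides_binomial g k' -> (k <= k')%N.

(* Modulo an irreducible g with g | x^k - a, we have x^k = a; if a <> 0, then
   writing m = q k + s with s < k gives x^m = a^q x^s, so g | x^m - r yields
   g | x^s - r / a^q and minimality of k forces s = 0.  If a = 0 then g is
   associate to x, whence k = 1.  Hence each m_i divides m, and so does their
   lcm. *)
From mathcomp Require Import all_boot all_order all_algebra.
From mathcomp Require Import ring.
Local Open Scope ring_scope.
Import GRing.Theory.

Section Binomials.

Context {F : fieldType}.
Implicit Types (g : {poly F}) (a r : F).

Lemma irredp_dvdp_Xn_dvdp_X g k :
  irreducible_poly g -> g %| 'X^k -> g %| 'X.
Proof.
move=> irr gXk; apply: contraT => ngX.
have cop : coprimep g 'X.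
  have [h|h] := irredp_XsubCP irr (dvdp_gcdl g 'X).
    by rewrite coprimep_def (eqp_size h) size_poly1.
  by rewrite -(eqp_dvdl _ h) dvdp_gcdr in ngX.
move: gXk; rewrite -[X in _ %| X]mul1r (Gauss_dvdpl _ (coprimep_expr k cop)).
by rewrite dvdp1 => /eqP g1; case: irr; rewrite g1.
Qed.

Lemma dvdp_XnsubC_modn g k m a r : a != 0 ->
  g %| 'X^k - a%:P -> g %| 'X^m - r%:P ->
  g %| 'X^(m %% k) - (r / a ^+ (m %/ k))%:P.
Proof.
move=> a0 gk gm; set q := (m %/ k)%N; set s := (m %% k)%N.
have aq0 : a ^+ q != 0 by rewrite expf_neq0.
have gqk : g %| 'X^s * ('X^(q * k) - (a ^+ q)%:P).
  by apply: dvdp_mull; rewrite mulnC exprM rmorphXn subrXX dvdp_mulr.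
have -> : 'X^s - (r / a ^+ q)%:P = (a ^+ q)^-1 *: (a ^+ q *: 'X^s - r%:P).
  by rewrite scalerBr scalerA mulVf // scale1r scale_polyC mulrC.
have -> : a ^+ q *: 'X^s - r%:P =
    ('X^m - r%:P) - 'X^s * ('X^(q * k) - (a ^+ q)%:P).
  by rewrite mulrBr -exprD addnC -divn_eq mulrC mul_polyC; ring.
by rewrite dvdpZr ?invr_eq0 // dvdp_sub.
Qed.

End Binomials.

Lemma minimal_binomial_exponent_dvdn g k m :
  irreducible_poly g -> minimal_binomial_exponent g k ->
  divides_binomial g m -> (k %| m)%N.
Proof.
move=> irr [k0 [[a ga] kmin]] [r gm].
have [a0|a0] := eqVneq a 0.
  have k1 : (k <= 1)%N.
    apply: kmin => //; exists 0; rewrite subr0 expr1.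
    by apply: (@irredp_dvdp_Xn_dvdp_X rat _ k irr); rewrite a0 polyC0 subr0 in ga.
  by rewrite (@anti_leq k 1) ?k1 ?k0 ?dvd1n.
have [s0|s_gt0] := posnP (m %% k); first by apply/eqP.
have gs : divides_binomial g (m %% k).
  by exists (r / a ^+ (m %/ k)); exact: (@dvdp_XnsubC_modn rat _ _ _ _ _ a0 ga gm).
have := kmin _ s_gt0 gs.
by rewrite leqNgt ltn_pmod.
Qed.

Theorem lemma3p4 (u : nat) (fs : 'I_u -> {poly rat}) (ms : 'I_u -> nat)
  (f : {poly rat}) (m : nat) (r : rat)
  (hinj : injective fs)
  (hirr : forall i, irreducible_poly (fs i))
  (hf : f = \prod_(i < u) fs i)
  (hms : forall i, minimal_binomial_exponent (fs i) (ms i))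
  (hm : (0 < m)%N)
  (hdiv : f %| 'X^m - r%:P) :
  (\big[lcmn/1%N]_(i < u) ms i %| m)%N.
Proof.
apply: (big_ind (fun d => d %| m)%N) => // [d e dm em|i _].
  by rewrite dvdn_lcm dm em.
apply: minimal_binomial_exponent_dvdn (hirr i) (hms i) _.
exists r; apply: dvdp_trans hdiv.
by rewrite hf (bigD1 i) //= dvdp_mulIl.
Qed.
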